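(* Let $G$ be a two-player game (players White and Black) with a finite set $\mathcal{P}$ of positions, in which every non-terminal position has at least one White option and at least one Black option, and in which each terminal position is designated as won by White or won by Black. Let $\alpha_n$, $\beta_n$, $\alpha$, $\beta$ be defined as in the context. Then for every position $P\in\mathcal{P}$, the numbers $\alpha(P)$ and $\beta(P)$ are rational.
   Context: The game is given by a finite set $\mathcal{P}$ of positions; each position $P$ has a set of White options and a set of Black options (positions $P_w$, resp. $P_b$, to which White, resp. Black, can move from $P$). Some positions are terminal, each designated as a White win or a Black win. Define $\alpha_n,\beta_n:\mathcal{P}\to[0,1]$ for $n\ge 0$ by: for every $n$, $\alpha_n(P)=\beta_n(P)=1$ if $P$ is a terminal White win and $\alpha_n(P)=\beta_n(P)=0$ if $P$ is a terminal Black win; for non-terminal $P$, $\alpha_0(P)=0$, $\beta_0(P)=1$, and $$\alpha_{n+1}(P)=\tfrac12\Big(\max_w \alpha_n(P_w)+\min_b \alpha_n(P_b)\Big),\qquad \beta_{n+1}(P)=\tfrac12\Big(\max_w \beta_n(P_w)+\min_b \beta_n(P_b)\Big),$$ where $w$ ranges over White options and $b$ over Black options of $P$. The sequence $\alpha_n(P)$ is nondecreasing and $\beta_n(P)$ is nonincreasing; set $\alpha(P)=\lim_n\alpha_n(P)$ and $\beta(P)=\lim_n\beta_n(P)$. (In the bidding interpretation with total money $1$, $\alpha(P)$ is the threshold of Black's bankroll below which White can force a win, and $\beta(P)$ the amount Black needs to force a win; in the random-turn interpretation with a fair coin deciding who moves, they are White's optimal probabilities of winning and of not losing.) *)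

From HB Require Import structures.
From mathcomp Require Import all_boot all_order all_algebra.
From mathcomp Require Import all_classical all_reals all_analysis.
Set Implicit Arguments. Unset Strict Implicit. Unset Printing Implicit Defensive.
Import Order.TTheory GRing.Theory Num.Theory numFieldNormedType.Exports.
Local Open Scope ring_scope.

(* A game on a finite set of positions T:
   - term P   : P is terminal;
   - wwin P   : (for terminal P) P is a White win (otherwise a Black win);
   - wopt P Q : Q is a White option of P (White may move from P to Q);
   - bopt P Q : Q is a Black option of P. *)

(* The iteration alpha_n (init = 0) / beta_n (init = 1).
   max over White options is \big[max/0], min over Black options is
   \big[min/1]; since all values lie in [0,1] and option sets of non-terminal
   positions are nonempty, these are the genuine max / min. *)
Fixpoint game_iter (R : realType) (T : finType) (term wwin : pred T)
    (wopt bopt : rel T) (init : R) (n : nat) (P : T) {struct n} : R :=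
  if term P then (if wwin P then 1 else 0)
  else match n with
       | 0 => init
       | n'.+1 =>
           ((\big[Order.max/0]_(Q | wopt P Q)
                game_iter term wwin wopt bopt init n' Q)
            + (\big[Order.min/1]_(Q | bopt P Q)
                game_iter term wwin wopt bopt init n' Q)) / 2
       end.

Definition alpha_n (R : realType) (T : finType) (term wwin : pred T)
  (wopt bopt : rel T) (n : nat) (P : T) : R :=
  game_iter term wwin wopt bopt 0 n P.

Definition beta_n (R : realType) (T : finType) (term wwin : pred T)
  (wopt bopt : rel T) (n : nat) (P : T) : R :=
  game_iter term wwin wopt bopt 1 n P.

Definition alpha (R : realType) (T : finType) (term wwin : pred T)
  (wopt bopt : rel T) (P : T) : R :=
  limn (fun n => @alpha_n R T term wwin wopt bopt n P).

Definition beta (R : realType) (T : finType) (term wwin : pred T)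
  (wopt bopt : rel T) (P : T) : R :=
  limn (fun n => @beta_n R T term wwin wopt bopt n P).

(* alpha is the least fixed point, among maps T -> [0,1], of the averaging
   operator [game_op] that defines alpha_(n+1) from alpha_n.  Fix moves w P, b P
   that are optimal for alpha.  Then alpha solves a linear system with rational
   coefficients: 2 alpha P = alpha (w P) + alpha (b P) at nonterminal P,
   alpha P = alpha Q whenever these values agree, and alpha P = 0 or 1 where
   it is.  If d solves the homogeneous system, then for small e > 0 the map
   alpha + e d orders the positions as alpha does and stays in [0,1], so w and b
   remain optimal and alpha + e d is again a fixed point; minimality gives d >= 0,
   and symmetrically d <= 0.  A rational linear system with a unique real
   solution has a rational solution.  Exchanging the players turns beta into
   1 - alpha. *)

From Pilot Require Import Defs.
From HB Require Import structures.
From mathcomp Require Import all_boot all_order all_algebra.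
From mathcomp Require Import all_classical all_reals all_analysis.
From mathcomp Require Import ring lra.
Import Order.TTheory GRing.Theory Num.Theory numFieldNormedType.Exports.
Local Open Scope classical_set_scope.
Local Open Scope ring_scope.

Section SubfieldSolution.
Variables (F K : fieldType) (f : {rmorphism F -> K}) (T C : finType).

Definition lin_comb (c : T -> F) (y : T -> K) : K := \sum_P f (c P) * y P.

Lemma lin_combBr c (y1 y2 : T -> K) :
  lin_comb c (fun P => y1 P - y2 P) = lin_comb c y1 - lin_comb c y2.
Proof. by rewrite -sumrB; apply: eq_bigr => P _; rewrite mulrBr. Qed.

Lemma lin_combBl (c1 c2 : T -> F) y :
  lin_comb (fun P => c1 P - c2 P) y = lin_comb c1 y - lin_comb c2 y.
Proof. by rewrite -sumrB; apply: eq_bigr => P _; rewrite rmorphB mulrBl. Qed.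

Lemma lin_combMn (c : T -> F) n y :
  lin_comb (fun P => c P *+ n) y = lin_comb c y *+ n.
Proof. by rewrite -sumrMnl; apply: eq_bigr => P _; rewrite rmorphMn mulrnAl. Qed.

Lemma lin_comb0 y : lin_comb (fun _ => 0) y = 0.
Proof. by rewrite /lin_comb big1 // => P _; rewrite rmorph0 mul0r. Qed.

Lemma lin_comb_dirac Q y : lin_comb (fun P => (P == Q)%:R) y = y Q.
Proof.
rewrite /lin_comb (bigD1 Q) //= eqxx rmorph1 mul1r big1 ?addr0 // => P /negbTE->.
by rewrite rmorph0 mul0r.
Qed.

Variables (coef : C -> T -> F) (rhs : C -> F).

Lemma unique_solution_in_subfield (a : T -> K) :
  (forall c, lin_comb (coef c) a = f (rhs c)) ->
  (forall d : T -> K, (forall c, lin_comb (coef c) d = 0) -> forall P, d P = 0) ->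
  exists q : T -> F, forall P, a P = f (q P).
Proof.
move=> a_sol ker0.
pose A : 'M[F]_(#|T|, #|C|) := \matrix_(i, j) coef (enum_val j) (enum_val i).
pose vec (y : T -> K) : 'rV[K]_#|T| := \row_i y (enum_val i).
have mulE y c : (vec y *m map_mx f A) 0 (enum_rank c) = lin_comb (coef c) y.
  rewrite mxE /lin_comb (big_enum_val (A := T)) /=; apply: eq_bigr => i _.
  by rewrite !mxE enum_rankK mulrC.
have /submxP[q qA] : (\row_j rhs (enum_val j) <= A)%MS.
  rewrite -(map_submx f); apply/submxP; exists (vec a); apply/rowP => j.
  by rewrite -[j]enum_valK mulE a_sol !mxE enum_rankK.
exists (fun P => q 0 (enum_rank P)) => P; apply/eqP; rewrite eq_sym -subr_eq0; apply/eqP.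
apply: (ker0 (fun P => f (q 0 (enum_rank P)) - a P)) => c.
rewrite lin_combBr a_sol -mulE.
have -> : vec (fun P => f (q 0 (enum_rank P))) = map_mx f q.
  by apply/rowP => i; rewrite !mxE enum_valK.
by rewrite -map_mxM -qA !mxE enum_rankK subrr.
Qed.

End SubfieldSolution.

Arguments lin_comb {F K} f {T} c y.
Arguments unique_solution_in_subfield {F K f T C coef rhs a}.

Lemma small_perturbation_le (R : realFieldType) (U : finType) (a d : U -> R) :
  (forall i j, a i = a j -> d i = d j) ->
  exists2 e : R, 0 < e & forall i j, a i <= a j -> a i + e * d i <= a j + e * d j.
Proof.
move=> a_d.
pose gap (ij : U * U) := (a ij.2 - a ij.1) / (1 + `|d ij.1 - d ij.2|).
have gap_den_gt0 i j : 0 < 1 + `|d i - d j| by rewrite ltr_pwDl.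
pose e := \big[Order.min/1]_(ij | a ij.1 < a ij.2) gap ij.
have e_gt0 : 0 < e.
  by apply/bigmin_gtP; split => // ij lt_ij; rewrite divr_gt0 ?subr_gt0.
exists e => // i j; rewrite le_eqVlt => /orP[/eqP eq_a | lt_a].
  by rewrite eq_a (a_d _ _ eq_a).
have : e * (1 + `|d i - d j|) <= a j - a i.
  rewrite -ler_pdivlMr //.
  exact: (@bigmin_le_cond _ _ _ 1 (i, j) (fun ij : U * U => a ij.1 < a ij.2) gap lt_a).
have := ler_wpM2l (ltW e_gt0) (ler_norm (d i - d j)).
rewrite !mulrDr mulrN mulr1; lra.
Qed.

Section Game.
Variables (R : realType) (T : finType) (term wwin : pred T) (wopt bopt : rel T).

Local Notation game_iter := (game_iter term wwin wopt bopt).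
Local Notation alpha_n := (@alpha_n R T term wwin wopt bopt).
Local Notation alpha := (@alpha R T term wwin wopt bopt).

Definition game_op (x : T -> R) (P : T) : R :=
  if term P then (if wwin P then 1 else 0)
  else ((\big[Order.max/0]_(Q | wopt P Q) x Q)
        + (\big[Order.min/1]_(Q | bopt P Q) x Q)) / 2.

Lemma game_iterS (init : R) n P :
  game_iter init n.+1 P = game_op (game_iter init n) P.
Proof. by []. Qed.

Lemma game_op_term x P : term P -> game_op x P = if wwin P then 1 else 0.
Proof. by rewrite /game_op => ->. Qed.

Lemma game_op_le x y : (forall Q, x Q <= y Q) -> forall P, game_op x P <= game_op y P.
Proof.
move=> le_xy P; rewrite /game_op; case: (term P) => //.
rewrite ler_pM2r ?invr_gt0 ?ltr0n //; apply: lerD.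
  by apply: le_bigmax2 => Q _.
by apply: le_bigmin2 => Q _.
Qed.

Lemma game_op_shift x e P :
  0 <= e -> game_op (fun Q => x Q + e) P <= game_op x P + e.
Proof.
move=> e_ge0; rewrite /game_op; case: (term P); first by rewrite lerDl.
have le_max : \big[Order.max/0]_(Q | wopt P Q) (x Q + e) <=
              \big[Order.max/0]_(Q | wopt P Q) x Q + e.
  apply: bigmax_le => [|Q wQ]; first by rewrite addr_ge0 ?bigmax_ge_id.
  by rewrite lerD2r le_bigmax_cond.
have le_min : \big[Order.min/1]_(Q | bopt P Q) (x Q + e) <=
              \big[Order.min/1]_(Q | bopt P Q) x Q + e.
  elim/big_ind2: _ => [|u1 u2 v1 v2 le_uv1 le_uv2|Q _]; first by rewrite lerDl.
    by case: (leP u1 v1) => _; [rewrite ge_min le_uv1 | rewrite ge_min le_uv2 orbT].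
  exact: lexx.
have := lerD le_max le_min; lra.
Qed.

Lemma game_op_in01 x P : (forall Q, 0 <= x Q <= 1) -> 0 <= game_op x P <= 1.
Proof.
move=> x01; rewrite /game_op; case: (term P); first by case: (wwin P); rewrite lexx ler01.
have : 0 <= \big[Order.max/0]_(Q | wopt P Q) x Q <= 1.
  rewrite bigmax_ge_id bigmax_le ?ler01 // => Q _; by case/andP: (x01 Q).
have : 0 <= \big[Order.min/1]_(Q | bopt P Q) x Q <= 1.
  rewrite bigmin_le_id le_bigmin ?ler01 // => Q _; by case/andP: (x01 Q).
move=> /andP[? ?] /andP[? ?]; apply/andP; split; lra.
Qed.

Lemma game_iter_in01 (init : R) n P :
  0 <= init <= 1 -> 0 <= game_iter init n P <= 1.
Proof.
move=> init01; elim: n P => [|n IHn] P; last exact: game_op_in01.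
by rewrite /=; case: (term P) => //; case: (wwin P); rewrite lexx ler01.
Qed.

Lemma alpha_n_in01 n P : 0 <= alpha_n n P <= 1.
Proof. by apply: game_iter_in01; rewrite lexx ler01. Qed.

Lemma alpha_n_nondecreasing P : nondecreasing_seq (alpha_n ^~ P).
Proof.
apply/nondecreasing_seqP => n; rewrite /Defs.alpha_n.
elim: n P => [|n IHn] P; last exact: game_op_le.
rewrite [X in X <= _]/=; case: ifP => [tP|_]; first by rewrite game_iterS game_op_term.
by case/andP: (alpha_n_in01 1 P).
Qed.

Lemma alpha_n_cvg P : alpha_n ^~ P @ \oo --> alpha P.
Proof.
apply: nondecreasing_is_cvgn; first exact: alpha_n_nondecreasing.
by exists 1 => _ [n _ <-]; case/andP: (alpha_n_in01 n P).
Qed.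

Lemma alpha_n_le_alpha n P : alpha_n n P <= alpha P.
Proof. exact: nondecreasing_cvgn_le (alpha_n_nondecreasing P) (alpha_n_cvg P) n. Qed.

Lemma alpha_le c P : (forall n, alpha_n n P <= c) -> alpha P <= c.
Proof.
by move=> le_c; apply: limr_le; [exact: alpha_n_cvg | near=> n].
Unshelve. all: by end_near.
Qed.

Lemma alpha_in01 P : 0 <= alpha P <= 1.
Proof.
apply/andP; split; last by apply: alpha_le => n; case/andP: (alpha_n_in01 n P).
by apply: le_trans (alpha_n_le_alpha 0 P); case/andP: (alpha_n_in01 0 P).
Qed.

Lemma alpha_n_uniform_approx e : 0 < e -> exists n, forall Q, alpha Q <= alpha_n n Q + e.
Proof.
move=> e_gt0.
have [N _ closeN] := filter_forall _ (fun Q => cvgr_dist_le _ _ (alpha_n_cvg Q) _ e_gt0).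
exists N => Q; have := closeN N (leqnn N) Q; rewrite ler_distlC => /andP[+ _].
lra.
Qed.

Lemma game_op_alpha P : game_op alpha P = alpha P.
Proof.
apply/eqP; rewrite eq_le; apply/andP; split.
  apply/ler_addgt0Pr => e e_gt0; have [n approx_n] := alpha_n_uniform_approx _ e_gt0.
  apply: le_trans (game_op_le _ _ approx_n P) _.
  apply: le_trans (game_op_shift _ _ P (ltW e_gt0)) _.
  by rewrite lerD2r -game_iterS alpha_n_le_alpha.
apply: alpha_le => n; apply: le_trans (alpha_n_nondecreasing P _ _ (leqnSn n)) _.
by apply: game_op_le => Q; exact: alpha_n_le_alpha.
Qed.

Lemma alpha_le_fixpoint x :
  (forall Q, 0 <= x Q) -> (forall Q, game_op x Q = x Q) -> forall P, alpha P <= x P.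
Proof.
move=> x_ge0 x_fix P; apply: alpha_le => n; rewrite /Defs.alpha_n.
elim: n P => [|n IHn] P; last by rewrite game_iterS -x_fix; exact: game_op_le.
by rewrite /=; case: ifP => [tP|_]; rewrite ?x_ge0 // -(game_op_term x _ tP) x_fix.
Qed.

Lemma game_op_optimal x P w b :
  ~~ term P -> (forall Q, 0 <= x Q <= 1) ->
  wopt P w -> (forall Q, wopt P Q -> x Q <= x w) ->
  bopt P b -> (forall Q, bopt P Q -> x b <= x Q) ->
  game_op x P = (x w + x b) / 2.
Proof.
move=> /negbTE ntP x01 Pw w_max Pb b_min; rewrite /game_op ntP.
have [/andP[xw0 _] /andP[_ xb1]] := (x01 w, x01 b).
congr ((_ + _) / 2); apply: le_anti.
  by rewrite bigmax_le //= le_bigmax_cond.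
by rewrite bigmin_le_cond //= le_bigmin.
Qed.

Definition white_best (x : T -> R) (P : T) : T :=
  if [pick Q | wopt P Q] is Some Q0 then Order.arg_max Q0 (wopt P) x else P.

Definition black_best (x : T -> R) (P : T) : T :=
  if [pick Q | bopt P Q] is Some Q0 then Order.arg_min Q0 (bopt P) x else P.

Lemma white_bestP x P : (exists Q, wopt P Q) ->
  wopt P (white_best x P) /\ forall Q, wopt P Q -> x Q <= x (white_best x P).
Proof.
move=> [Q0 PQ0]; rewrite /white_best; case: pickP => [Q1 PQ1 | /(_ Q0)]; last by rewrite PQ0.
by case: arg_maxP.
Qed.

Lemma black_bestP x P : (exists Q, bopt P Q) ->
  bopt P (black_best x P) /\ forall Q, bopt P Q -> x (black_best x P) <= x Q.
Proof.
move=> [Q0 PQ0]; rewrite /black_best; case: pickP => [Q1 PQ1 | /(_ Q0)]; last by rewrite PQ0.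
by case: arg_minP.
Qed.

Section Perturbation.
Variables (w b : T -> T).
Hypothesis w_opt : forall P, ~~ term P ->
  wopt P (w P) /\ forall Q, wopt P Q -> alpha Q <= alpha (w P).
Hypothesis b_opt : forall P, ~~ term P ->
  bopt P (b P) /\ forall Q, bopt P Q -> alpha (b P) <= alpha Q.

Definition alpha_kernel (d : T -> R) : Prop :=
  [/\ forall P Q, alpha P = alpha Q -> d P = d Q,
      forall P, alpha P = 0 \/ alpha P = 1 -> d P = 0
    & forall P, ~~ term P -> d P *+ 2 = d (w P) + d (b P)].

Lemma alpha_kernelN {d} : alpha_kernel d -> alpha_kernel (fun P => - d P).
Proof.
case=> d_level d_bound d_avg; split=> [P Q /d_level-> | P /d_bound-> | P /d_avg].
- by [].
- by rewrite oppr0.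
- by rewrite mulNrn => ->; rewrite opprD.
Qed.

Lemma game_op_alpha_perturbed d e : alpha_kernel d ->
  let x P := alpha P + e * d P in
  (forall P Q, alpha P <= alpha Q -> x P <= x Q) -> (forall P, 0 <= x P <= 1) ->
  forall P, game_op x P = x P.
Proof.
case=> _ d_bound d_avg x x_mono x01 P; case/boolP: (term P) => [tP | ntP].
  have alphaP : alpha P = if wwin P then 1 else 0 by rewrite -game_op_alpha game_op_term.
  rewrite /x d_bound ?mulr0 ?addr0 ?game_op_term //.
  by case: (wwin P) alphaP; [right | left].
have [Pw w_max] := w_opt P ntP; have [Pb b_min] := b_opt P ntP.
have alphaP : alpha P = (alpha (w P) + alpha (b P)) / 2.
  by rewrite -[LHS]game_op_alpha (game_op_optimal _ _ _ _ ntP alpha_in01 Pw w_max Pb b_min).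
have dP : d P = (d (w P) + d (b P)) / 2 by rewrite -(d_avg P ntP); lra.
rewrite (game_op_optimal _ _ _ _ ntP x01 Pw (fun Q PQ => x_mono _ _ (w_max Q PQ)) Pb
                         (fun Q PQ => x_mono _ _ (b_min Q PQ))).
by rewrite /x alphaP dP; ring.
Qed.

Lemma alpha_kernel_ge0 {d} : alpha_kernel d -> forall P, 0 <= d P.
Proof.
move=> kd; have [d_level d_bound _] := kd.
(* The two extra points, of values 0 and 1, keep the perturbation in [0,1]. *)
pose a' (i : T + bool) : R := if i is inl P then alpha P else (i == inr true)%:R.
pose d' (i : T + bool) : R := if i is inl P then d P else 0.
have [e e_gt0 mono] : exists2 e : R, 0 < e &
    forall i j, a' i <= a' j -> a' i + e * d' i <= a' j + e * d' j.
  apply: small_perturbation_le => -[P|[]] [Q|[]] //=; first exact: d_level.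
  1,2: by move=> alphaP; rewrite d_bound; auto.
  1,2: by move=> /esym alphaQ; rewrite d_bound; auto.
pose x P := alpha P + e * d P.
have x_mono P Q : alpha P <= alpha Q -> x P <= x Q := mono (inl P) (inl Q).
have x01 P : 0 <= x P <= 1.
  have /andP[alphaP0 alphaP1] := alpha_in01 P.
  have := mono (inr false) (inl P) alphaP0; have := mono (inl P) (inr true) alphaP1.
  by rewrite /= !mulr0 !addr0 => -> ->.
have x_ge0 Q : 0 <= x Q by case/andP: (x01 Q).
move=> P; have := alpha_le_fixpoint x x_ge0 (game_op_alpha_perturbed d e kd x_mono x01) P.
by rewrite /x lerDl pmulr_rge0.
Qed.

Lemma alpha_kernel_eq0 {d} : alpha_kernel d -> forall P, d P = 0.
Proof.
move=> kd P; apply/eqP; rewrite eq_le (alpha_kernel_ge0 kd) andbT -oppr_ge0.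
exact: (alpha_kernel_ge0 (alpha_kernelN kd)).
Qed.

End Perturbation.

Section AlphaRational.
Hypothesis white_move : forall P, ~~ term P -> exists Q, wopt P Q.
Hypothesis black_move : forall P, ~~ term P -> exists Q, bopt P Q.

Local Notation w := (white_best alpha).
Local Notation b := (black_best alpha).

(* The index [inl (inl (P, Q))] encodes alpha P = alpha Q, [inl (inr P)] the
   averaging equation at P, and [inr P] the value of alpha P when it is 0 or 1;
   an index whose equation does not hold for alpha encodes the trivial 0 = 0. *)
Definition alpha_coef (c : (T * T + T) + T) : T -> rat :=
  match c with
  | inl (inl (P, Q)) =>
      if alpha P == alpha Q then fun S => (S == P)%:R - (S == Q)%:R else fun _ => 0
  | inl (inr P) =>
      if term P then fun _ => 0
      else fun S => (S == P)%:R *+ 2 - (S == w P)%:R - (S == b P)%:R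
  | inr P => if (alpha P == 0) || (alpha P == 1) then fun S => (S == P)%:R else fun _ => 0
  end.

Definition alpha_rhs (c : (T * T + T) + T) : rat :=
  if c is inr P then (alpha P == 1)%:R else 0.

Lemma lin_comb_alpha_coef c : lin_comb ratr (alpha_coef c) alpha = ratr (alpha_rhs c).
Proof.
case: c => [[[P Q] | P] | P] /=.
- case: eqP => [eqPQ | _]; last by rewrite lin_comb0 rmorph0.
  by rewrite lin_combBl !lin_comb_dirac eqPQ subrr rmorph0.
- case/boolP: (term P) => [_ | ntP]; first by rewrite lin_comb0 rmorph0.
  have [Pw w_max] := white_bestP alpha P (white_move P ntP).
  have [Pb b_min] := black_bestP alpha P (black_move P ntP).
  rewrite !lin_combBl lin_combMn !lin_comb_dirac rmorph0.
  rewrite -[alpha P]game_op_alpha (game_op_optimal _ _ _ _ ntP alpha_in01 Pw w_max Pb b_min).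
  lra.
- case: ifP => [alpha01 | /norP[_ /negbTE->]]; last by rewrite lin_comb0 rmorph0.
  rewrite lin_comb_dirac; case/orP: alpha01 => /eqP->.
    by rewrite eq_sym oner_eq0 rmorph0.
  by rewrite eqxx rmorph1.
Qed.

Lemma alpha_coef_kernel d :
  (forall c, lin_comb ratr (alpha_coef c) d = 0) -> alpha_kernel w b d.
Proof.
move=> coef_d; split.
- move=> P Q eqPQ; have := coef_d (inl (inl (P, Q))).
  by rewrite /= eqPQ eqxx lin_combBl !lin_comb_dirac => /eqP; rewrite subr_eq0 => /eqP.
- move=> P alpha01; have := coef_d (inr P).
  by case: alpha01 => /= ->; rewrite eqxx ?orbT lin_comb_dirac.
- move=> P ntP; have := coef_d (inl (inr P)).
  rewrite /= (negbTE ntP) !lin_combBl lin_combMn !lin_comb_dirac; lra.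
Qed.

Lemma alpha_rat P : exists q : rat, alpha P = ratr q.
Proof.
have w_opt Q (ntQ : ~~ term Q) := white_bestP alpha Q (white_move Q ntQ).
have b_opt Q (ntQ : ~~ term Q) := black_bestP alpha Q (black_move Q ntQ).
have [q alpha_q] := unique_solution_in_subfield lin_comb_alpha_coef
  (fun d coef_d => alpha_kernel_eq0 w b w_opt b_opt (alpha_coef_kernel d coef_d)).
by exists (q P).
Qed.

End AlphaRational.

End Game.

Arguments alpha_rat R {T term} wwin {wopt bopt}.

Lemma subr_minr (R : realDomainType) (z x y : R) :
  z - Num.min x y = Num.max (z - x) (z - y).
Proof. by rewrite oppr_min addr_maxr. Qed.

Lemma subr_maxr (R : realDomainType) (z x y : R) :
  z - Num.max x y = Num.min (z - x) (z - y).
Proof. by rewrite oppr_max addr_minr. Qed.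

Lemma beta_n_dual (R : realType) (T : finType) (term wwin : pred T) (wopt bopt : rel T) n P :
  @beta_n R T term wwin wopt bopt n P =
  1 - @alpha_n R T term (fun Q => ~~ wwin Q) bopt wopt n P.
Proof.
rewrite /beta_n /alpha_n; elim: n P => [|n IHn] P /=.
  by case: (term P); [case: (wwin P) | ]; rewrite /= ?subr0 ?subrr.
case: (term P); first by case: (wwin P); rewrite /= ?subr0 ?subrr.
under eq_bigr do rewrite IHn.
under [X in _ + X]eq_bigr do rewrite IHn.
rewrite -(big_morph (fun v : R => 1 - v) (subr_minr _ 1) (subrr 1)).
rewrite -(big_morph (fun v : R => 1 - v) (subr_maxr _ 1) (subr0 1)).
lra.
Qed.

Lemma beta_dual (R : realType) (T : finType) (term wwin : pred T) (wopt bopt : rel T) P :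
  @beta R T term wwin wopt bopt P =
  1 - @alpha R T term (fun Q => ~~ wwin Q) bopt wopt P.
Proof.
apply: cvg_lim => //.
have -> : @beta_n R T term wwin wopt bopt ^~ P =
          fun n => 1 - @alpha_n R T term (fun Q => ~~ wwin Q) bopt wopt n P.
  by apply: funext => n; exact: beta_n_dual.
by apply: cvgB; [exact: cvg_cst | exact: alpha_n_cvg].
Qed.

Theorem proposition1 (R : realType) (T : finType) (term wwin : pred T)
    (wopt bopt : rel T)
    (hW : forall P : T, ~~ term P -> exists Q : T, wopt P Q)
    (hB : forall P : T, ~~ term P -> exists Q : T, bopt P Q) :
  forall P : T,
    (exists q : rat, @alpha R T term wwin wopt bopt P = ratr q) /\
    (exists q : rat, @beta R T term wwin wopt bopt P = ratr q).
Proof.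
move=> P; split; first exact: (alpha_rat R wwin hW hB P).
have [q alpha_q] := alpha_rat R (fun Q => ~~ wwin Q) hB hW P.
by exists (1 - q); rewrite beta_dual alpha_q rmorphB rmorph1.
Qed.
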